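(* Let $\phi\ge1$, let $p\in\mathbb{R}_{\ge0}^n$ be arbitrary, and let each weight $w_i$ be chosen uniformly at random from an arbitrary interval $A_i\subseteq[0,1]$ of length $1/\phi$, independently of the other weights. Let $t\ge0$. Then for every $i\in\{1,\ldots,n\}$ and every $\varepsilon\ge0$, $\Pr[\Lambda^i(t)\in(0,\varepsilon]]\le\phi\varepsilon$.
   Context: For $i\in\{1,\ldots,n\}$ and $j\in\{0,1\}$ let $\mathcal{S}^{x_i=j}=\{x\in\{0,1\}^n: x_i=j\}$. Let $x^{\star,i}$ be a solution maximizing $p^{\mathsf T}x$ over $\{x\in\mathcal{S}^{x_i=0}: w^{\mathsf T}x\le t\}$, and let $\hat{x}^i$ be a solution minimizing $w^{\mathsf T}x$ over $\{x\in\mathcal{S}^{x_i=1}: p^{\mathsf T}x>p^{\mathsf T}x^{\star,i}\}$, with $\hat{x}^i=\perp$ if this set is empty. Define $\Lambda^i(t)=w^{\mathsf T}\hat{x}^i-t$ if $\hat{x}^i\ne\perp$ and $\Lambda^i(t)=\infty$ otherwise. *)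

From HB Require Import structures.
From mathcomp Require Import all_boot all_order all_algebra.
From mathcomp Require Import all_classical all_reals all_analysis.
Set Implicit Arguments. Unset Strict Implicit. Unset Printing Implicit Defensive.
Import Order.TTheory GRing.Theory Num.Theory.
Local Open Scope classical_set_scope.
Local Open Scope ring_scope.

Definition bvec (n : nat) := {ffun 'I_n -> bool}.

Definition dot (R : realType) (n : nat) (c : 'I_n -> R) (x : bvec n) : R :=
  \sum_(j < n) c j * (x j)%:R.

(* p^T x^{*,i}: the optimal value of max p^T x over
   { x in S^{x_i=0} : w^T x <= t }.  Since p >= 0 and x = 0 is feasible
   (t >= 0), the identity 0 of the big max does not affect the value. *)
Definition optval (R : realType) (n : nat) (p w : 'I_n -> R) (t : R) (i : 'I_n) : R :=
  \big[Num.max/0]_(x : bvec n | (~~ x i) && (dot w x <= t)) dot p x.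

(* Lambda^i(t) = w^T xhat^i - t, where xhat^i minimizes w^T x over
   { x in S^{x_i=1} : p^T x > p^T x^{*,i} }, and Lambda^i(t) = +oo if that
   set is empty (the empty min over \bar R is +oo, and +oo - t = +oo). *)
Definition Lambda (R : realType) (n : nat) (p w : 'I_n -> R) (t : R) (i : 'I_n)
  : \bar R :=
  ((\big[Order.min/+oo%E]_(x : bvec n | x i && (optval p w t i < dot p x)%R)
      (dot w x)%:E) - t%:E)%E.

Definition mutually_independent d (T : measurableType d) (R : realType)
  (P : probability T R) (n : nat) (X : 'I_n -> {RV P >-> R}) : Prop :=
  forall (S : {set 'I_n}) (B : 'I_n -> set R),
    (forall j, measurable (B j)) ->
    P (\bigcap_(j in [set j | j \in S]) (X j @^-1` B j)) =
    (\prod_(j in S) P (X j @^-1` B j))%E.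

Lemma interval_len_pos (R : realType) (a phi : R) : 1 <= phi -> a < a + phi^-1.
Proof.
move=> h; rewrite ltrDl invr_gt0; exact: (lt_le_trans ltr01 h).
Qed.

From HB Require Import structures.
From mathcomp Require Import all_boot all_order all_algebra.
From mathcomp Require Import all_classical all_reals all_analysis.
From mathcomp Require Import measurable_realfun lra.
Import Order.TTheory GRing.Theory Num.Theory.
Local Open Scope classical_set_scope.
Local Open Scope ring_scope.

(** In both optimisation problems defining [Lambda^i(t)] the coordinate [x_i]
    is fixed, so [w_i] does not affect [x^{*,i}] and adds exactly [w_i] to
    [w^T x] on [S^{x_i=1}]: [Lambda^i(t) = w_i + M - t] where [M] depends only
    on the other weights.  Hence [Lambda^i(t) \in (0, eps]] says that [w_i] lies
    in the window [(s, s + eps]], [s = t - M], whose position is independent of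
    [w_i], while [w_i] has density at most [phi].  Instead of conditioning on
    [s], cut its range into slots of width [del]: on the slot of [s], [w_i] lies
    in a fixed interval of length [eps + del], so independence bounds the
    probability by [phi (eps + del)]; then let [del] tend to [0]. *)

Section measurable_bigop.
Context {d : measure_display} {T : measurableType d} {R : realType}.
Variables (I : Type) (P : I -> T -> bool).
Hypothesis mP : forall k, measurable_fun setT (P k).

Lemma measurable_fun_bigmaxr (s : seq I) (x0 : R) (f : I -> T -> R) :
  (forall k, measurable_fun setT (f k)) ->
  measurable_fun setT (fun om => \big[Num.max/x0]_(k <- s | P k om) f k om).
Proof.
move=> mf; elim: s => [|k s IH].
  under eq_fun do rewrite big_nil; exact: measurable_cst.
under eq_fun do rewrite big_cons.
apply: measurable_fun_if => //; last exact: measurable_funS IH.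
by apply: measurable_maxr; [exact: measurable_funS (mf k)|exact: measurable_funS IH].
Qed.

Lemma measurable_fun_bigmine (s : seq I) (x0 : \bar R) (f : I -> T -> \bar R) :
  (forall k, measurable_fun setT (f k)) ->
  measurable_fun setT (fun om => \big[Order.min/x0]_(k <- s | P k om) f k om).
Proof.
move=> mf; elim: s => [|k s IH].
  under eq_fun do rewrite big_nil; exact: measurable_cst.
under eq_fun do rewrite big_cons.
apply: measurable_fun_if => //; last exact: measurable_funS IH.
by apply: measurable_mine; [exact: measurable_funS (mf k)|exact: measurable_funS IH].
Qed.

End measurable_bigop.

Lemma measurable_fun_g_sigma {d d'} {T : measurableType d} {U : measurableType d'}
    {G : set (set T)} {f : T -> U} :
  G `<=` measurable ->
  measurable_fun (setT : set (g_sigma_algebraType G)) f ->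
  measurable_fun (setT : set T) f.
Proof.
move=> GT mf _ B mB; apply: (smallest_sub (@sigma_algebra_measurable _ T) GT).
exact: mf.
Qed.

Lemma EFin_adde_bigmin {R : realDomainType} (I : Type) (r : seq I) (P : pred I)
    (F : I -> \bar R) (c : R) :
  (c%:E + \big[Order.min/+oo]_(k <- r | P k) F k =
   \big[Order.min/+oo]_(k <- r | P k) (c%:E + F k))%E.
Proof.
apply: (big_morph (adde c%:E)) => [x y|]; last by [].
by rewrite /Order.min /= lteD2lE //; case: ifP.
Qed.

Lemma addeB_itvoc_fine {R : realDomainType} (x t eps : R) (M : \bar R) :
  (0 < x%:E + M - t%:E)%E -> (x%:E + M - t%:E <= eps%:E)%E ->
  t - fine M < x <= t - fine M + eps.
Proof.
case: M => [r| |] /=.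
- by rewrite -!EFinD lte_fin lee_fin => ? ?; apply/andP; split; lra.
- by rewrite addey // addye // leye_eq.
- by rewrite addeNy addNye.
Qed.

Section dot_erase.
Context {R : realType} {n : nat}.
Implicit Types (p w : 'I_n -> R) (x : bvec n).

Definition erase_coord (i : 'I_n) w : 'I_n -> R :=
  fun j => if j == i then 0 else w j.

(* [w^T \hat x^i], and [+oo] when [\hat x^i = ⊥]. *)
Definition min_weight_improving p w (t : R) (i : 'I_n) : \bar R :=
  \big[Order.min/+oo%E]_(x : bvec n | x i && (optval p w t i < dot p x))
    (dot w x)%:E.

Lemma dot_erase_coord i w x : dot w x = w i * (x i)%:R + dot (erase_coord i w) x.
Proof.
rewrite /dot (bigD1 i) //= [X in _ = _ + X](bigD1 i) //= /erase_coord eqxx.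
by rewrite mul0r add0r; congr (_ + _); apply: eq_bigr => j /negbTE ->.
Qed.

Lemma optval_erase_coord p w t i : optval p (erase_coord i w) t i = optval p w t i.
Proof.
apply: eq_bigl => x; case/boolP: (x i) => //= xi.
by rewrite [dot w x](dot_erase_coord i) (negbTE xi) mulr0 add0r.
Qed.

Lemma Lambda_erase_coord p w t i :
  Lambda p w t i =
  ((w i)%:E + min_weight_improving p (erase_coord i w) t i - t%:E)%E.
Proof.
rewrite /Lambda /min_weight_improving optval_erase_coord.
rewrite EFin_adde_bigmin; congr (_ - _)%E.
apply: eq_bigr => x /andP[xi _].
by rewrite (dot_erase_coord i) xi mulr1.
Qed.

End dot_erase.

Section measurable_min_weight.
Context {d : measure_display} {T : measurableType d} {R : realType} {n : nat}
  (v : T -> 'I_n -> R) (p : 'I_n -> R) (t : R) (i : 'I_n).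
Hypothesis mv : forall j, measurable_fun setT (fun om => v om j).

Lemma measurable_dot (x : bvec n) : measurable_fun setT (fun om => dot (v om) x).
Proof.
apply: measurable_sum => j; apply: measurable_funM => //; exact: measurable_cst.
Qed.

Lemma measurable_optval : measurable_fun setT (fun om => optval p (v om) t i).
Proof.
apply: measurable_fun_bigmaxr => [x|x]; last exact: measurable_cst.
apply: measurable_and; first exact: measurable_cst.
by apply: measurable_fun_ler; [exact: measurable_dot|exact: measurable_cst].
Qed.

Lemma measurable_min_weight_improving :
  measurable_fun setT (fun om => min_weight_improving p (v om) t i).
Proof.
apply: measurable_fun_bigmine => x; last by apply/measurable_EFinP; exact: measurable_dot.
apply: measurable_and; first exact: measurable_cst.
by apply: measurable_fun_ltr; [exact: measurable_optval|exact: measurable_cst].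
Qed.

Lemma measurable_Lambda_itvoc (eps : R) :
  measurable [set om | (0 < Lambda p (v om) t i)%E /\ (Lambda p (v om) t i <= eps%:E)%E].
Proof.
have mL : measurable_fun setT (fun om => Lambda p (v om) t i).
  by apply: emeasurable_funB => //; exact: measurable_min_weight_improving.
have -> : [set om | (0 < Lambda p (v om) t i)%E /\ (Lambda p (v om) t i <= eps%:E)%E]
    = (fun om => Lambda p (v om) t i) @^-1` `]0%E, eps%:E].
  by apply/seteqP; split => om /=; rewrite in_itv /=; [move=> [-> ->]|move/andP].
by rewrite -[X in measurable X]setTI; apply: mL => //; exact: emeasurable_itv.
Qed.

End measurable_min_weight.

Section independence_except.
Context {R : realType} {d : measure_display} {T : measurableType d}
  {P : probability T R} {n : nat} (w : 'I_n -> {RV P >-> R}) (i : 'I_n).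

Definition cylinders_except : set (set T) := [set A | exists B : 'I_n -> set R,
  (forall j, measurable (B j)) /\
  A = \bigcap_(j in [set j | j \in [set~ i]%SET]) (w j @^-1` B j)].

Lemma cylinders_except_measurable : cylinders_except `<=` measurable.
Proof.
move=> _ [B [mB ->]]; apply: fin_bigcap_measurable; first exact: finite_finset.
by move=> j _; exact: measurable_funPTI.
Qed.

Lemma cylinders_exceptT : cylinders_except setT.
Proof. by exists (fun=> setT); split => //; apply/seteqP; split => // x _ j _. Qed.

Lemma cylinders_exceptI : setI_closed cylinders_except.
Proof.
move=> _ _ [B [mB ->]] [C [mC ->]].
exists (fun j => B j `&` C j); split; first by move=> j; exact: measurableI.
apply/seteqP; split => x; first by move=> [hB hC] j hj; split; [exact: hB|exact: hC].
by move=> h; split => j hj; have [] := h j hj.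
Qed.

Lemma measurable_erase_coord_except j :
  measurable_fun (setT : set (g_sigma_algebraType cylinders_except))
    (fun om => erase_coord i (fun k => w k om) j).
Proof.
rewrite /erase_coord; case: eqP => [_|/eqP ji]; first exact: measurable_cst.
move=> _ B mB; apply: sub_sigma_algebra.
exists (fun k => if k == j then B else setT); split; first by move=> k; case: eqP.
apply/seteqP; split => om; first by move=> [_ hB] k _; case: eqP => [->|].
by move=> h; split => //; have := h j; rewrite eqxx; apply; rewrite /mkset in_setC1.
Qed.

Lemma measurable_min_weight_except (p : 'I_n -> R) (t : R) :
  measurable_fun (setT : set (g_sigma_algebraType cylinders_except))
    (fun om => min_weight_improving p (erase_coord i (fun j => w j om)) t i).
Proof. exact: measurable_min_weight_improving measurable_erase_coord_except. Qed.

Hypothesis hindep : mutually_independent w.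

Lemma indep_cylinders_except (A : set T) (B : set R) :
  cylinders_except A -> measurable B ->
  P (A `&` w i @^-1` B) = (P A * P (w i @^-1` B))%E.
Proof.
move=> [C [mC ->]] mB.
pose C' j := if j == i then B else C j.
have mC' j : measurable (C' j) by rewrite /C'; case: ifP.
have -> : \bigcap_(j in [set j | j \in [set~ i]%SET]) (w j @^-1` C j) `&` w i @^-1` B
    = \bigcap_(j in [set j | j \in [set: 'I_n]%SET]) (w j @^-1` C' j).
  apply/seteqP; split => x.
    move=> [hC hB] j _; rewrite /C'; case: eqP => [->//|/eqP ji].
    by apply: hC; rewrite /= in_setC1.
  move=> h; split; last by have := h i; rewrite /C' eqxx; apply; exact: finset.in_setT.
  move=> j; rewrite /= in_setC1 => ji.
  by have := h j; rewrite /C' (negbTE ji); apply; exact: finset.in_setT.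
rewrite hindep // hindep // (bigD1 i) ?finset.in_setT //= muleC /C' eqxx.
congr (_ * _)%E; apply: eq_big => j; first by rewrite finset.in_setT in_setC1.
by move=> /andP[_ /negbTE ->].
Qed.

Lemma indep_sigma_except (A : set T) (B : set R) :
  <<s cylinders_except >> A -> measurable B ->
  P (A `&` w i @^-1` B) = (P A * P (w i @^-1` B))%E.
Proof.
move=> hA mB.
have mWB : measurable (w i @^-1` B) by exact: measurable_funPTI.
have WBfin : P (w i @^-1` B) \is a fin_num by exact: fin_num_measure.
have c0 : 0 <= fine (P (w i @^-1` B)) by apply: fine_ge0; exact: measure_ge0.
have cover : \bigcup_(k : nat) (fun=> @setT T) k = setT.
  by apply/seteqP; split => // x _; exists 0%N.
(* Both sides are finite measures in [A] that agree on the pi-system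
   [cylinders_except]. *)
suff : mrestr P mWB A = mscale (NngNum c0) P A.
  by rewrite /mscale /= fineK // muleC.
apply: (@g_sigma_algebra_measure_unique _ _ _ _ cylinders_except_measurable
  (fun=> setT) (fun=> cylinders_exceptT) cover _ _ cylinders_exceptI) hA.
- move=> C hC; transitivity (P (C `&` w i @^-1` B)) => //.
  rewrite indep_cylinders_except //.
  by transitivity ((fine (P (w i @^-1` B)))%:E * P C)%E; rewrite // fineK // muleC.
- move=> _; change (P (setT `&` w i @^-1` B) < +oo)%E; rewrite setTI.
  exact: le_lt_trans (probability_le1 P mWB) (ltry 1).
Qed.

End independence_except.

Lemma uniform_prob_itvoc_le {R : realType} {a b : R} (ab : a < b) (x y : R) :
  x <= y -> (uniform_prob ab `]x, y] <= ((b - a)^-1 * (y - x))%:E)%E.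
Proof.
move=> xy; have ba0 : 0 < (b - a)^-1 by rewrite invr_gt0 subr_gt0.
apply: (@le_trans _ _ (\int[lebesgue_measure]_(z in `]x, y]) (cst (b - a)^-1%:E) z)%E).
  apply: ge0_le_integral => //.
  - by move=> z _; rewrite lee_fin uniform_pdf_ge0.
  - by apply/measurable_EFinP; exact: measurable_funS (measurable_uniform_pdf _ _).
  - by move=> z _; rewrite lee_fin /uniform_pdf; case: ifP => _; last exact: ltW.
rewrite integral_cst // [X in (_ * X <= _)%E](lebesgue_measure_itv `]x, y]) /= lte_fin.
case: ltP => [_|_]; first by rewrite -EFinD -EFinM.
by rewrite mule0 lee_fin mulr_ge0 ?subr_ge0 // ltW.
Qed.

Lemma uniform_prob_setC_itv {R : realType} {a b : R} (lo hi : R) (ab : a < b) :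
  lo <= a -> b <= hi -> uniform_prob ab (~` `[lo, hi]) = 0%E.
Proof.
move=> loa bhi; apply: integral0_eq => x hx.
rewrite /uniform_pdf; case: ifP => // /andP[ax xb]; exfalso; apply: hx.
by rewrite /= in_itv /= (le_trans loa ax) (le_trans xb bhi).
Qed.

Section slots.
Context {R : realType} (b del : R).
Hypothesis del0 : 0 < del.

Definition slot (m : nat) : R := b + m%:R * del.

Definition slot_of (s : R) : nat := Num.trunc ((s - b) / del).

Lemma slot_ofP (s : R) : b <= s -> slot (slot_of s) <= s < slot (slot_of s) + del.
Proof.
move=> bs; have q0 : 0 <= (s - b) / del by rewrite divr_ge0 ?subr_ge0 // ltW.
have /andP[] := trunc_itv q0.
rewrite -/(slot_of s) ler_pdivlMr // ltr_pdivrMr // -natr1 /slot => ? ?.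
by apply/andP; split; lra.
Qed.

Lemma slot_of_lt (s c : R) : s < c -> (slot_of s < (slot_of c).+1)%N.
Proof. by move=> sc; rewrite ltnS le_truncn // ler_pM2r ?invr_gt0 //; lra. Qed.

Lemma slot_uniq (m1 m2 : nat) (s : R) :
  slot m1 <= s < slot m1 + del -> slot m2 <= s < slot m2 + del -> m1 = m2.
Proof.
have lt_slot k1 k2 : slot k1 <= s -> s < slot k2 + del -> (k1 <= k2)%N.
  rewrite /slot => ? ?; have : k1%:R * del < k2.+1%:R * del by rewrite -natr1; lra.
  by rewrite ltr_pM2r // ltr_nat ltnS.
move=> /andP[? ?] /andP[? ?]; apply/eqP; rewrite eqn_leq.
by rewrite (lt_slot m1 m2) ?(lt_slot m2 m1).
Qed.

End slots.

Section anticoncentration.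
Context {d : measure_display} {T : measurableType d} {R : realType}
  (P : probability T R) (X Y : T -> R) (phi lo hi eps : R).
Hypotheses (mX : measurable_fun setT X) (mY : measurable_fun setT Y).
Hypotheses (phi0 : 0 <= phi) (eps0 : 0 <= eps).
Hypothesis X_itvoc : forall x y, x <= y ->
  (P (X @^-1` `]x, y]) <= (phi * (y - x))%:E)%E.
Hypothesis X_support : P (X @^-1` ~` `[lo, hi]) = 0%E.
Hypothesis XY_indep : forall B C, measurable B -> measurable C ->
  P (Y @^-1` B `&` X @^-1` C) = (P (Y @^-1` B) * P (X @^-1` C))%E.

Lemma measurable_window : measurable [set om | Y om < X om <= Y om + eps].
Proof.
have mb : measurable_fun setT (fun om => (Y om < X om) && (X om <= Y om + eps)).
  apply: measurable_and; first exact: measurable_fun_ltr.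
  by apply: measurable_fun_ler => //; apply: measurable_funD => //; exact: measurable_cst.
by rewrite -[X in measurable X]setTI -[X in _ `&` X]preimage_true; exact: mb.
Qed.

Lemma anticoncentration_slack (del : R) : 0 < del ->
  (P [set om | (Y om < X om <= Y om + eps)%R] <= (phi * (eps + del))%:E)%E.
Proof.
move=> del0; pose b := lo - eps.
(* The slots [m < K] cover every position [Y om] of a window meeting [[lo, hi]]. *)
pose K := (slot_of b del hi).+1.
pose S m := Y @^-1` `[slot b del m, slot b del m + del[.
pose J m := X @^-1` `]slot b del m, slot b del m + (del + eps)].
have mS m : measurable (S m) by rewrite -[S m]setTI; exact: mY.
have mJ m : measurable (J m) by rewrite -[J m]setTI; exact: mX.
have mN : measurable (X @^-1` ~` `[lo, hi]).
  rewrite -[X in measurable X]setTI; apply: mX => //.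
  exact: measurableC (measurable_itv _).
have cover : [set om | Y om < X om <= Y om + eps] `<=`
    (X @^-1` ~` `[lo, hi]) `|` \big[setU/set0]_(m < K) (S m `&` J m).
  move=> om /andP[YX XY].
  have [/= Xin|] := pselect ([set` `[lo, hi]] (X om)); last by left.
  right; move: Xin; rewrite in_itv /= => /andP[loX Xhi].
  have /andP[? ?] : slot b del (slot_of b del (Y om)) <= Y om <
      slot b del (slot_of b del (Y om)) + del by apply: slot_ofP; rewrite /b; lra.
  rewrite -(bigcup_mkord K (fun m => S m `&` J m)).
  exists (slot_of b del (Y om)); first by apply: slot_of_lt; lra.
  by split; rewrite /S /J /= in_itv /=; apply/andP; split; lra.
have S_triv : trivIset setT (fun m : 'I_K => S m).
  move=> m1 m2 _ _ [om []]; rewrite /S /= !in_itv /= => Y1 Y2.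
  by apply: val_inj; exact: slot_uniq b del del0 _ _ _ Y1 Y2.
have J_bound m : (P (J m) <= (phi * (eps + del))%:E)%E.
  have xy : slot b del m <= slot b del m + (del + eps).
    by rewrite lerDl addr_ge0 // ltW.
  by apply: le_trans (X_itvoc _ _ xy) _; rewrite lee_fin addrAC subrr add0r addrC.
have slot_bound m : (P (S m `&` J m) <= P (S m) * (phi * (eps + del))%:E)%E.
  rewrite /S /J XY_indep //; apply: lee_wpmul2l; [exact: measure_ge0|exact: J_bound].
apply: le_trans (le_measure _ _ _ cover) _; rewrite ?inE.
- exact: measurable_window.
- by apply: measurableU => //; apply: bigsetU_measurable => m _; exact: measurableI.
apply: le_trans (measureU2 _ mN _) _.
  by apply: bigsetU_measurable => m _; exact: measurableI.
rewrite [X in (X + _)%E]X_support add0e.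
apply: le_trans (@le_mu_bigsetU _ _ _ P (fun m => S m `&` J m) K _) _.
  by move=> m _; exact: measurableI.
apply: le_trans (lee_sum _ (fun (m : 'I_K) _ => slot_bound m)) _.
rewrite -ge0_sume_distrl; last by move=> m _; exact: measure_ge0.
rewrite -(measure_bigsetU_ord P xpredT (fun m => mS m) S_triv).
apply: le_trans (lee_wpmul2r _ (probability_le1 P _)) _.
- by rewrite lee_fin mulr_ge0 // addr_ge0 // ltW.
- by apply: bigsetU_measurable => m _; exact: mS.
by rewrite mul1e.
Qed.

Lemma anticoncentration :
  (P [set om | (Y om < X om <= Y om + eps)%R] <= (phi * eps)%:E)%E.
Proof.
apply/lee_addgt0Pr => g g0.
have phi1 : 0 < phi + 1 := ltr_wpDl phi0 ltr01.
apply: le_trans (anticoncentration_slack _ (divr_gt0 g0 phi1)) _.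
by rewrite -EFinD lee_fin mulrDr lerD2l mulrCA ger_pMr // ler_pdivrMr // mul1r lerDl.
Qed.

End anticoncentration.

Theorem lemma2p7 (R : realType) (d : measure_display) (T : measurableType d)
  (P : probability T R) (n : nat) (phi : R) (hphi : 1 <= phi)
  (p : 'I_n -> R) (hp : forall j, 0 <= p j)
  (a : 'I_n -> R) (ha0 : forall j, 0 <= a j) (ha1 : forall j, a j + phi^-1 <= 1)
  (w : 'I_n -> {RV P >-> R})
  (hunif : forall j (B : set R), measurable B ->
     distribution P (w j) B = uniform_prob (interval_len_pos (a j) hphi) B)
  (hindep : mutually_independent w)
  (t : R) (ht : 0 <= t) (i : 'I_n) (eps : R) (heps : 0 <= eps) :
  (P [set om | (0 < Lambda p (fun j => w j om) t i)%E /\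
               (Lambda p (fun j => w j om) t i <= eps%:E)%E]
   <= (phi * eps)%:E)%E.
Proof.
pose Y om := t - fine (min_weight_improving p (erase_coord i (fun j => w j om)) t i).
have mY_G : measurable_fun (setT : set (g_sigma_algebraType (cylinders_except w i))) Y.
  apply: measurable_funB; first exact: measurable_cst.
  apply: measurableT_comp; first exact: fine_measurable.
  exact: measurable_min_weight_except.
have mY := measurable_fun_g_sigma (cylinders_except_measurable w i) mY_G.
set E := [set om | _ /\ _].
have E_window : E `<=` [set om | Y om < w i om <= Y om + eps].
  by move=> om [] /=; rewrite Lambda_erase_coord; exact: addeB_itvoc_fine.
have phi0 : 0 <= phi := le_trans ler01 hphi.
apply: le_trans (le_measure _ _ _ E_window) _; rewrite ?inE.
- by apply: measurable_Lambda_itvoc => j; exact: measurable_funPT.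
- exact: measurable_window.
apply: (anticoncentration P (w i) Y phi 0 1 eps _ mY phi0 heps).
- exact: measurable_funPT.
- move=> x y xy; rewrite [X in (X <= _)%E](hunif i _ (measurable_itv `]x, y])).
  apply: le_trans (uniform_prob_itvoc_le _ _ _ xy) _.
  by rewrite addrC addKr invrK.
- rewrite [X in X = _](hunif i _ (measurableC (measurable_itv `[0, 1]))).
  exact: uniform_prob_setC_itv.
- move=> B C mB mC; apply: indep_sigma_except => //.
  by rewrite -[X in <<s _ >> X]setTI; exact: mY_G.
Qed.
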